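(* Let $\lambda_0$ be a real number, let $\lambda_1=\lambda_0$, let $\lambda_2,\dots,\lambda_n\in\mathbb{C}$, and suppose that $E_{(\lambda_2,\dots,\lambda_n)}$ is an extended Chebyshev space over $[a,b]$ ($a<b$) that is closed under complex conjugation. Let $p_{n,0},\dots,p_{n,n}$ be a Bernstein basis of $E_{(\lambda_0,\lambda_0,\lambda_2,\dots,\lambda_n)}$ for $\{a,b\}$ consisting of real-valued functions non-negative on $[a,b]$. Then there exist unique points $t_0,\dots,t_n\in[a,b]$ and unique positive coefficients $\alpha_0,\dots,\alpha_n$ such that the operator $B_n:C[a,b]\to E_{(\lambda_0,\lambda_0,\lambda_2,\dots,\lambda_n)}$, $B_nf=\sum_{k=0}^nf(t_k)\alpha_kp_{n,k}$, satisfies $B_n(e^{\lambda_0x})=e^{\lambda_0x}$ and $B_n(xe^{\lambda_0x})=xe^{\lambda_0x}$.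
   Context: For complex numbers $\mu_0,\dots,\mu_m$ (repetitions allowed), $E_{(\mu_0,\dots,\mu_m)}=\{f\in C^\infty(\mathbb{R},\mathbb{C}):(\frac{d}{dx}-\mu_0)\cdots(\frac{d}{dx}-\mu_m)f=0\}$ (dimension $m+1$), considered on $[a,b]$; it is closed under complex conjugation if $\bar f$ belongs to it whenever $f$ does. An $(m+1)$-dimensional space $V\subset C^m([a,b],\mathbb{C})$ is an extended Chebyshev space over $[a,b]$ if every non-zero $f\in V$ has at most $m$ zeros in $[a,b]$ counting multiplicities. A function has a zero of order $k$ at $c$ if $f(c)=\dots=f^{(k-1)}(c)=0\ne f^{(k)}(c)$ (one-sided at endpoints); a Bernstein basis for $\{a,b\}$ of an $(m+1)$-dimensional space is a system $p_{m,0},\dots,p_{m,m}$ in it with $p_{m,k}$ having a zero of order exactly $k$ at $a$ and exactly $m-k$ at $b$. *)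

From Stdlib Require Import Reals Lra Lia List.
From Coquelicot Require Import Coquelicot.
Open Scope R_scope.

Definition reP (f : R -> C) : R -> R := fun x => fst (f x).
Definition imP (f : R -> C) : R -> R := fun x => snd (f x).

Definition smooth (f : R -> C) : Prop :=
  forall (k : nat) (x : R), ex_derive_n (reP f) k x /\ ex_derive_n (imP f) k x.

Definition Dn (k : nat) (f : R -> C) : R -> C :=
  fun x => (Derive_n (reP f) k x, Derive_n (imP f) k x).

Definition Dop (mu : C) (f : R -> C) : R -> C :=
  fun x => Cminus (Dn 1 f x) (Cmult mu (f x)).

Definition Lop (mus : list C) (f : R -> C) : R -> C :=
  fold_right (fun mu g => Dop mu g) f mus.

Definition inE (mus : list C) (f : R -> C) : Prop :=
  smooth f /\ forall x, Lop mus f x = RtoC 0.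

Definition conj_closed (mus : list C) : Prop :=
  forall f, inE mus f -> inE mus (fun x => Cconj (f x)).

Definition zero_atleast (f : R -> C) (c : R) (k : nat) : Prop :=
  forall j, (j < k)%nat -> Dn j f c = RtoC 0.

Definition zero_order (f : R -> C) (c : R) (k : nat) : Prop :=
  zero_atleast f c k /\ Dn k f c <> RtoC 0.

(** E_(mus) (of dimension m+1 = length mus) is an extended Chebyshev space over
    [a,b]: every f in it, not identically zero on [a,b], has at most m zeros in
    [a,b] counting multiplicities; i.e. for any finite family of distinct points
    c_i of [a,b] at which f has zeros of multiplicity >= k_i, sum k_i <= m. *)
Definition ext_chebyshev (mus : list C) (a b : R) : Prop :=
  forall f, inE mus f ->
    (exists x, a <= x <= b /\ f x <> RtoC 0) ->
    forall zs : list (R * nat),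
      NoDup (map fst zs) ->
      List.Forall (fun z => a <= fst z <= b /\ zero_atleast f (fst z) (snd z)) zs ->
      (list_sum (map snd zs) <= length mus - 1)%nat.

Definition bernstein_basis (mus : list C) (a b : R) (n : nat) (p : nat -> R -> C) : Prop :=
  forall k, (k <= n)%nat ->
    inE mus (p k) /\ zero_order (p k) a k /\ zero_order (p k) b (n - k).

Definition Bop (n : nat) (t alpha : nat -> R) (p : nat -> R -> C) (f : R -> R) : R -> C :=
  fun x => fold_right Cplus (RtoC 0)
             (map (fun k => Cmult (RtoC (f (t k) * alpha k)) (p k x)) (seq 0 (S n))).

Definition reproduces (n : nat) (a b l0 : R) (p : nat -> R -> C) (t alpha : nat -> R) : Prop :=
  (forall k, (k <= n)%nat -> a <= t k <= b /\ 0 < alpha k) /\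
  (forall x, a <= x <= b ->
     Bop n t alpha p (fun y => exp (l0 * y)) x = RtoC (exp (l0 * x))) /\
  (forall x, a <= x <= b ->
     Bop n t alpha p (fun y => y * exp (l0 * y)) x = RtoC (x * exp (l0 * x))).

From Stdlib Require Import Reals Lra Lia List Sorting FunctionalExtensionality.
From Coquelicot Require Import Coquelicot.
Open Scope R_scope.

(* Expanding e^(l0 x) = sum c_k p_k and x e^(l0 x) = sum d_k p_k on [a,b] (the coefficients
   come from matching derivatives at a, where p_k vanishes to order exactly k), the two
   reproduction identities force f(t_k) alpha_k to be these coefficients, so t_k = d_k / c_k and
   alpha_k = c_k e^(-l0 t_k); uniqueness is the linear independence of the p_k. It remains to
   see c_k > 0, a = t_0 < t_1, t_k <= t_(k+1) and t_n = b. For a real H with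
   (d/dx - l0)^2 H in E_(l2,...,ln) we have (d/dx - l0)^2 H = (e^(-l0 x) H)'' e^(l0 x), so
   (e^(-l0 x) H)'' has at most n - 2 zeros in [a,b] unless it vanishes there. With Rolle's
   theorem this fixes the sign of e^(-l0 x) H for the partial sums sum_(j<=k) c_j p_j and
   sum_(j<=k) (d_j - t_(k+1) c_j) p_j, which yields these inequalities. *)

Definition Rsmooth (f : R -> R) : Prop := forall k x, ex_derive_n f k x.

Lemma Rsmooth_ex_derive f x : Rsmooth f -> ex_derive f x.
Proof. intros Hf. exact (Hf 1%nat x). Qed.

Lemma Rsmooth_continuity_pt f x : Rsmooth f -> continuity_pt f x.
Proof.
  intros Hf. apply continuity_pt_filterlim, (ex_derive_continuous f x), Rsmooth_ex_derive, Hf.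
Qed.

Lemma Derive_n_S_Derive f k x : Derive_n f (S k) x = Derive_n (Derive f) k x.
Proof.
  replace (S k) with (k + 1)%nat by lia. rewrite <- (Derive_n_comp f k 1).
  now apply Derive_n_ext.
Qed.

Lemma Rsmooth_ext f g : (forall x, f x = g x) -> Rsmooth f -> Rsmooth g.
Proof. intros E Hf k x. exact (ex_derive_n_ext f g k x E (Hf k x)). Qed.

Lemma Rsmooth_Derive f : Rsmooth f -> Rsmooth (Derive f).
Proof.
  intros Hf [|k] x; [exact I|].
  apply (ex_derive_ext (Derive_n f (S k))).
  - intros y. apply Derive_n_S_Derive.
  - exact (Hf (S (S k)) x).
Qed.

Lemma Rsmooth_const c : Rsmooth (fun _ => c).
Proof. intros k x. apply ex_derive_n_const. Qed.

Lemma Rsmooth_id : Rsmooth (fun x => x).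
Proof.
  apply (Rsmooth_ext (fun x => x ^ 1)); [intros; ring|].
  intros k x. apply ex_derive_n_pow.
Qed.

Lemma Rsmooth_lin u f v g :
  Rsmooth f -> Rsmooth g -> Rsmooth (fun x => u * f x + v * g x).
Proof.
  intros Hf Hg k x.
  apply ex_derive_n_plus; apply filter_forall; intros y j _; apply ex_derive_n_scal_l;
    [apply Hf | apply Hg].
Qed.

Lemma Derive_n_lin u f v g k x : Rsmooth f -> Rsmooth g ->
  Derive_n (fun y => u * f y + v * g y) k x = u * Derive_n f k x + v * Derive_n g k x.
Proof.
  intros Hf Hg. rewrite Derive_n_plus, !Derive_n_scal_l; [reflexivity| |];
    apply filter_forall; intros; apply ex_derive_n_scal_l; [apply Hf | apply Hg].
Qed.

Lemma Derive_lin u f v g x : Rsmooth f -> Rsmooth g ->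
  Derive (fun y => u * f y + v * g y) x = u * Derive f x + v * Derive g x.
Proof. apply (Derive_n_lin u f v g 1). Qed.

Lemma Rsmooth_minus f g : Rsmooth f -> Rsmooth g -> Rsmooth (fun x => f x - g x).
Proof.
  intros Hf Hg. apply (Rsmooth_ext (fun x => 1 * f x + (-1) * g x)); [intros; ring|].
  apply Rsmooth_lin; assumption.
Qed.

Lemma Derive_n_minus f g k x : Rsmooth f -> Rsmooth g ->
  Derive_n (fun y => f y - g y) k x = Derive_n f k x - Derive_n g k x.
Proof.
  intros Hf Hg. rewrite (Derive_n_ext _ (fun y => 1 * f y + (-1) * g y)) by (intros; ring).
  rewrite Derive_n_lin by assumption. ring.
Qed.

Lemma Rsmooth_mult_upto m : forall f g, Rsmooth f -> Rsmooth g ->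
  forall k x, (k <= m)%nat -> ex_derive_n (fun y => f y * g y) k x.
Proof.
  induction m as [|m IH]; intros f g Hf Hg [|[|k]] x Hk; try exact I; try lia.
  - apply ex_derive_mult; apply Rsmooth_ex_derive; assumption.
  - apply (ex_derive_ext (Derive_n (fun y => Derive f y * g y + f y * Derive g y) k)).
    + intros y. rewrite (Derive_n_S_Derive (fun y => f y * g y)).
      apply Derive_n_ext. intros z.
      symmetry. apply Derive_mult; apply Rsmooth_ex_derive; assumption.
    + apply (ex_derive_n_plus _ _ (S k)); apply filter_forall; intros y j Hj;
        apply IH; auto using Rsmooth_Derive; lia.
Qed.

Lemma Rsmooth_mult f g : Rsmooth f -> Rsmooth g -> Rsmooth (fun x => f x * g x).
Proof. intros Hf Hg k x. exact (Rsmooth_mult_upto k f g Hf Hg k x (le_n k)). Qed.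

Lemma Derive_n_exp_scal c k x : Derive_n (fun y => exp (c * y)) k x = c ^ k * exp (c * x).
Proof.
  revert x; induction k as [|k IH]; intros x; [simpl; ring|].
  simpl. rewrite (Derive_ext _ (fun y => c ^ k * exp (c * y))) by apply IH.
  apply is_derive_unique. auto_derive; [exact I|ring].
Qed.

Lemma Rsmooth_exp_scal c : Rsmooth (fun x => exp (c * x)).
Proof.
  intros [|k] x; [exact I|].
  apply (ex_derive_ext (fun y => c ^ k * exp (c * y))).
  - intros y. symmetry. apply Derive_n_exp_scal.
  - auto_derive. exact I.
Qed.

Lemma MVT_Rsmooth f x y : Rsmooth f -> x < y ->
  exists z, x < z < y /\ f y - f x = Derive f z * (y - x).
Proof.
  intros Hf Hxy. destruct (MVT_cor2 f (Derive f) x y Hxy) as [z [Ez Hz]].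
  - intros c _. apply is_derive_Reals, Derive_correct, Rsmooth_ex_derive, Hf.
  - exists z. split; assumption.
Qed.

Lemma Rolle_Rsmooth f x y : Rsmooth f -> x < y -> f x = 0 -> f y = 0 ->
  exists z, x < z < y /\ Derive f z = 0.
Proof.
  intros Hf Hxy Hx Hy. destruct (MVT_Rsmooth f x y Hf Hxy) as [z [Hz E]].
  exists z. split; [exact Hz|].
  rewrite Hx, Hy in E.
  destruct (Rmult_integral (Derive f z) (y - x)) as [H|H]; [lra|exact H|lra].
Qed.

Lemma Derive_zero_const f a b : Rsmooth f -> (forall x, a <= x <= b -> Derive f x = 0) ->
  forall x, a <= x <= b -> f x = f a.
Proof.
  intros Hf Hd x Hx. destruct (Req_dec x a) as [->|Hxa]; [reflexivity|].
  destruct (MVT_Rsmooth f a x Hf) as [z [Hz E]]; [lra|].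
  rewrite Hd in E by lra. lra.
Qed.

Lemma point_right_of a b d : a < b -> 0 < d -> exists x, a < x < a + d /\ x < b.
Proof.
  intros Hab Hd. exists (a + Rmin d (b - a) / 2).
  pose proof (Rmin_l d (b - a)). pose proof (Rmin_r d (b - a)).
  assert (0 < Rmin d (b - a)) by (apply Rmin_glb_lt; lra). lra.
Qed.

Lemma point_left_of a b d : a < b -> 0 < d -> exists x, b - d < x < b /\ a < x.
Proof.
  intros Hab Hd. destruct (point_right_of (- b) (- a) d) as [x Hx]; [lra|lra|].
  exists (- x). lra.
Qed.

Lemma continuity_pt_eps f c eps : continuity_pt f c -> 0 < eps ->
  exists d, 0 < d /\ forall y, Rabs (y - c) < d -> Rabs (f y - f c) < eps.
Proof.
  intros Hf Heps. destruct (Hf eps Heps) as [d [Hd Hy]]. exists d. split; [exact Hd|].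
  intros y Hyc. destruct (Req_dec y c) as [->|Hne].
  - unfold Rminus. rewrite Rplus_opp_r, Rabs_R0. exact Heps.
  - apply (Hy y). split; [split; [exact I|auto]|exact Hyc].
Qed.

Lemma continuity_pt_sign f c : continuity_pt f c -> f c <> 0 ->
  exists d, 0 < d /\ forall y, Rabs (y - c) < d -> f y * f c > 0.
Proof.
  intros Hf Hc. destruct (continuity_pt_eps f c (Rabs (f c)) Hf) as [d [Hd Hy]].
  { apply Rabs_pos_lt, Hc. }
  exists d. split; [exact Hd|]. intros y Hyc. specialize (Hy y Hyc).
  apply Rabs_def2 in Hy. destruct (Rle_lt_dec 0 (f c)).
  - rewrite Rabs_right in Hy by lra. apply Rlt_gt, Rmult_lt_0_compat; lra.
  - rewrite Rabs_left in Hy by lra. nra.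
Qed.

Lemma continuity_pt_zero_near f c : continuity_pt f c ->
  (forall d, 0 < d -> exists y, Rabs (y - c) < d /\ f y = 0) -> f c = 0.
Proof.
  intros Hf Hnear. destruct (Req_dec (f c) 0) as [|Hc]; [assumption|exfalso].
  destruct (continuity_pt_sign f c Hf Hc) as [d [Hd Hy]].
  destruct (Hnear d Hd) as [y [Hyc Hfy]]. specialize (Hy y Hyc). rewrite Hfy in Hy. lra.
Qed.

Lemma positive_on_open f a b x0 : continuity f -> a <= x0 <= b -> 0 < f x0 ->
  (forall z, a < z < b -> f z <> 0) -> forall x, a < x < b -> 0 < f x.
Proof.
  intros Hf Hx0 Hpos Hnz x Hx. destruct (Rlt_or_le 0 (f x)) as [|Hle]; [assumption|exfalso].
  destruct (Rle_dec x0 x) as [Hle'|Hle'].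
  - destruct (IVT_cor f x0 x Hf Hle') as [z [Hz Hfz]]; [nra|].
    assert (z <> x0) by (intros ->; lra). apply (Hnz z); [lra|exact Hfz].
  - destruct (IVT_cor f x x0 Hf) as [z [Hz Hfz]]; [lra|nra|].
    assert (z <> x0) by (intros ->; lra). apply (Hnz z); [lra|exact Hfz].
Qed.

Definition Rzero_atleast (f : R -> R) (c : R) (m : nat) : Prop :=
  forall j, (j < m)%nat -> Derive_n f j c = 0.

Lemma Rzero_atleast_ext f g c m :
  (forall x, f x = g x) -> Rzero_atleast f c m -> Rzero_atleast g c m.
Proof. intros E Hf j Hj. rewrite <- (Derive_n_ext f g j c E). apply Hf, Hj. Qed.

Lemma Rzero_atleast_le f c m m' : (m' <= m)%nat -> Rzero_atleast f c m -> Rzero_atleast f c m'.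
Proof. intros Hm Hf j Hj. apply Hf. lia. Qed.

Lemma Rzero_atleast_value f c m : (1 <= m)%nat -> Rzero_atleast f c m -> f c = 0.
Proof. intros Hm Hf. exact (Hf 0%nat Hm). Qed.

Lemma Rzero_atleast_1 f c : f c = 0 -> Rzero_atleast f c 1.
Proof. intros Hc [|j] Hj; [exact Hc|lia]. Qed.

Lemma Rzero_atleast_S f c m :
  Rzero_atleast f c m -> Derive_n f m c = 0 -> Rzero_atleast f c (S m).
Proof.
  intros Hf Hm j Hj. destruct (Nat.eq_dec j m) as [->|Hne]; [exact Hm|apply Hf; lia].
Qed.

Lemma Rzero_atleast_Derive f c m : Rzero_atleast f c m -> Rzero_atleast (Derive f) c (m - 1).
Proof. intros Hf j Hj. rewrite <- Derive_n_S_Derive. apply Hf. lia. Qed.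

Lemma Rzero_atleast_lin u f v g c m : Rsmooth f -> Rsmooth g ->
  Rzero_atleast f c m -> Rzero_atleast g c m -> Rzero_atleast (fun x => u * f x + v * g x) c m.
Proof. intros Hf Hg Zf Zg j Hj. rewrite Derive_n_lin, Zf, Zg by assumption. ring. Qed.

Lemma Rzero_atleast_mult m : forall f h c, Rsmooth f -> Rsmooth h -> Rzero_atleast f c m ->
  Rzero_atleast (fun x => f x * h x) c m /\
  Derive_n (fun x => f x * h x) m c = Derive_n f m c * h c.
Proof.
  induction m as [|m IH]; intros f h c Hf Hh Zf; [split; [intros j Hj; lia|reflexivity]|].
  assert (Leibniz : forall j, Derive_n (fun x => f x * h x) (S j) c =
    Derive_n (fun x => Derive f x * h x) j c + Derive_n (fun x => f x * Derive h x) j c).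
  { intros j. rewrite Derive_n_S_Derive.
    rewrite (Derive_n_ext _ (fun y => 1 * (Derive f y * h y) + 1 * (f y * Derive h y))).
    - rewrite Derive_n_lin by (apply Rsmooth_mult; auto using Rsmooth_Derive). ring.
    - intros y. rewrite Derive_mult by (apply Rsmooth_ex_derive; assumption). ring. }
  assert (Zf' := Rzero_atleast_Derive f c (S m) Zf). rewrite Nat.sub_1_r in Zf'.
  destruct (IH (Derive f) h c (Rsmooth_Derive f Hf) Hh Zf') as [A1 A2].
  assert (Zf'' := Rzero_atleast_le f c (S m) m (le_S _ _ (le_n m)) Zf).
  destruct (IH f (Derive h) c Hf (Rsmooth_Derive h Hh) Zf'') as [B1 B2].
  split.
  - intros [|j] Hj.
    + simpl. rewrite (Rzero_atleast_value f c (S m)) by (auto; lia). ring.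
    + rewrite Leibniz, A1, B1 by lia. ring.
  - rewrite Leibniz, A2, B2, (Zf m), <- Derive_n_S_Derive by lia. ring.
Qed.

Lemma Rzero_atleast_sign_right m : forall f c, Rsmooth f -> Rzero_atleast f c m ->
  Derive_n f m c <> 0 -> exists d, 0 < d /\ forall x, c < x < c + d -> f x * Derive_n f m c > 0.
Proof.
  induction m as [|m IH]; intros f c Hf Zf Hm.
  - destruct (continuity_pt_sign f c (Rsmooth_continuity_pt f c Hf) Hm) as [d [Hd H]].
    exists d. split; [exact Hd|]. intros x Hx. apply H. rewrite Rabs_right; lra.
  - rewrite Derive_n_S_Derive in *.
    assert (Zf' := Rzero_atleast_Derive f c (S m) Zf). rewrite Nat.sub_1_r in Zf'.
    destruct (IH (Derive f) c (Rsmooth_Derive f Hf) Zf' Hm) as [d [Hd H]].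
    exists d. split; [exact Hd|]. intros x Hx.
    destruct (MVT_Rsmooth f c x Hf) as [z [Hz E]]; [lra|].
    rewrite (Rzero_atleast_value f c (S m)) in E by (auto; lia).
    specialize (H z ltac:(lra)). nra.
Qed.

Lemma Rzero_atleast_sign_left m : forall f c, Rsmooth f -> Rzero_atleast f c m ->
  Derive_n f m c <> 0 ->
  exists d, 0 < d /\ forall x, c - d < x < c -> f x * ((-1) ^ m * Derive_n f m c) > 0.
Proof.
  induction m as [|m IH]; intros f c Hf Zf Hm.
  - destruct (continuity_pt_sign f c (Rsmooth_continuity_pt f c Hf) Hm) as [d [Hd H]].
    exists d. split; [exact Hd|]. intros x Hx. rewrite Rmult_1_l. apply H. rewrite Rabs_left; lra.
  - rewrite Derive_n_S_Derive in *.
    assert (Zf' := Rzero_atleast_Derive f c (S m) Zf). rewrite Nat.sub_1_r in Zf'.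
    destruct (IH (Derive f) c (Rsmooth_Derive f Hf) Zf' Hm) as [d [Hd H]].
    exists d. split; [exact Hd|]. intros x Hx.
    destruct (MVT_Rsmooth f x c Hf) as [z [Hz E]]; [lra|].
    rewrite (Rzero_atleast_value f c (S m)) in E by (auto; lia).
    specialize (H z ltac:(lra)). simpl pow. nra.
Qed.

Lemma leading_Derive_pos_right f a b m : a < b -> Rsmooth f -> Rzero_atleast f a m ->
  Derive_n f m a <> 0 -> (forall x, a < x < b -> 0 <= f x) -> 0 < Derive_n f m a.
Proof.
  intros Hab Hf Zf Hm Hnn.
  destruct (Rzero_atleast_sign_right m f a Hf Zf Hm) as [d [Hd Hs]].
  destruct (point_right_of a b d Hab Hd) as [x [Hx Hxb]].
  specialize (Hs x Hx). specialize (Hnn x ltac:(lra)). nra.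
Qed.

Lemma leading_Derive_neg_right f a b m : a < b -> Rsmooth f -> Rzero_atleast f a m ->
  Derive_n f m a <> 0 -> (forall x, a < x < b -> f x <= 0) -> Derive_n f m a < 0.
Proof.
  intros Hab Hf Zf Hm Hnp.
  destruct (Rzero_atleast_sign_right m f a Hf Zf Hm) as [d [Hd Hs]].
  destruct (point_right_of a b d Hab Hd) as [x [Hx Hxb]].
  specialize (Hs x Hx). specialize (Hnp x ltac:(lra)). nra.
Qed.

Lemma leading_Derive_pos_left f a b m : a < b -> Rsmooth f -> Rzero_atleast f b m ->
  Derive_n f m b <> 0 -> (forall x, a < x < b -> 0 <= f x) -> 0 < (-1) ^ m * Derive_n f m b.
Proof.
  intros Hab Hf Zf Hm Hnn.
  destruct (Rzero_atleast_sign_left m f b Hf Zf Hm) as [d [Hd Hs]].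
  destruct (point_left_of a b d Hab Hd) as [x [Hx Hxa]].
  specialize (Hs x Hx). specialize (Hnn x ltac:(lra)). nra.
Qed.

Lemma leading_Derive_neg_left f a b m : a < b -> Rsmooth f -> Rzero_atleast f b m ->
  Derive_n f m b <> 0 -> (forall x, a < x < b -> f x <= 0) -> (-1) ^ m * Derive_n f m b < 0.
Proof.
  intros Hab Hf Zf Hm Hnp.
  destruct (Rzero_atleast_sign_left m f b Hf Zf Hm) as [d [Hd Hs]].
  destruct (point_left_of a b d Hab Hd) as [x [Hx Hxa]].
  specialize (Hs x Hx). specialize (Hnp x ltac:(lra)). nra.
Qed.

Lemma vanishing_Derive_n_endpoints f a b : Rsmooth f -> a < b ->
  (forall x, a <= x <= b -> f x = 0) -> forall j, Derive_n f j a = 0 /\ Derive_n f j b = 0.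
Proof.
  intros Hf Hab Hz [|j]; [split; apply Hz; lra|].
  assert (Hin : forall y, a < y < b -> Derive_n f (S j) y = 0).
  { intros y Hy. set (e := Rmin (y - a) (b - y)).
    assert (He : 0 < e) by (apply Rmin_glb_lt; lra).
    rewrite (Derive_n_ext_loc f (fun _ => 0)); [apply Derive_n_const|].
    exists (mkposreal e He). intros t Ht. apply Hz.
    change (Rabs (t - y) < e) in Ht. apply Rabs_def2 in Ht.
    pose proof (Rmin_l (y - a) (b - y)). pose proof (Rmin_r (y - a) (b - y)).
    unfold e in *. lra. }
  assert (Hc : forall x, continuity_pt (Derive_n f (S j)) x).
  { intros x. apply continuity_pt_filterlim, (ex_derive_continuous (Derive_n f (S j)) x).
    exact (Hf (S (S j)) x). }
  split; apply continuity_pt_zero_near; auto; intros d Hd.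
  - destruct (point_right_of a b d Hab Hd) as [y Hy].
    exists y. split; [rewrite Rabs_right; lra|apply Hin; lra].
  - destruct (point_left_of a b d Hab Hd) as [y Hy].
    exists y. split; [rewrite Rabs_left; lra|apply Hin; lra].
Qed.

Lemma Derive2_zero_const w a b y : Rsmooth w ->
  (forall x, a <= x <= b -> Derive (Derive w) x = 0) -> a <= y <= b -> Derive w y = 0 ->
  forall x, a <= x <= b -> w x = w a.
Proof.
  intros Hw H2 Hy Hwy. apply Derive_zero_const; [exact Hw|].
  intros x Hx. rewrite (Derive_zero_const (Derive w) a b (Rsmooth_Derive w Hw) H2 x Hx).
  rewrite <- (Derive_zero_const (Derive w) a b (Rsmooth_Derive w Hw) H2 y Hy). exact Hwy.
Qed.

Definition zero_list (f : R -> R) (lo hi : R) (zs : list (R * nat)) : Prop :=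
  StronglySorted (fun u v => fst u < fst v) zs /\
  List.Forall (fun z : R * nat => lo <= fst z <= hi /\ Rzero_atleast f (fst z) (snd z)) zs.

Definition total_mult (zs : list (R * nat)) : nat := list_sum (map snd zs).

Ltac solve_zero_list :=
  split; [repeat constructor; simpl; lra
         |repeat (apply List.Forall_cons; [split; [simpl; lra|assumption]|]);
          apply List.Forall_nil].

Lemma zero_list_NoDup f lo hi zs : zero_list f lo hi zs -> NoDup (map fst zs).
Proof.
  intros [Hs _]. induction Hs as [|z zs _ IH Hlt]; simpl; constructor; [|exact IH].
  rewrite in_map_iff. intros [z' [Ez Hz']]. rewrite Forall_forall in Hlt.
  specialize (Hlt z' Hz'). lra.
Qed.

Lemma zero_list_filter_pos f lo hi zs : zero_list f lo hi zs ->
  let zs' := filter (fun z => Nat.leb 1 (snd z)) zs in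
  zero_list f lo hi zs' /\ List.Forall (fun z => 1 <= snd z)%nat zs' /\
  total_mult zs' = total_mult zs.
Proof.
  intros [Hs Hz] zs'. subst zs'. induction Hs as [|[x m] zs Hs IH Hlt]; [repeat constructor|].
  inversion_clear Hz as [|? ? Hxm Hzs]. destruct (IH Hzs) as [[Hs' Hz'] [Hpos Htot]].
  unfold total_mult in *. destruct m as [|m]; cbn [filter].
  - change (1 <=? snd (x, 0%nat))%nat with false. cbn iota.
    repeat split; [exact Hs'|exact Hz'|exact Hpos|].
    unfold list_sum in *. cbn [fold_right map snd]. lia.
  - change (1 <=? snd (x, S m))%nat with true. cbn iota. repeat split.
    + constructor; [exact Hs'|]. apply List.Forall_forall. intros z Hz. apply filter_In in Hz.
      rewrite List.Forall_forall in Hlt. apply Hlt, Hz.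
    + constructor; [exact Hxm|exact Hz'].
    + constructor; [simpl; lia|exact Hpos].
    + unfold list_sum in *. cbn [fold_right map snd]. lia.
Qed.

Lemma zero_list_cons f lo' lo hi x m zs : lo' <= x < lo -> x <= hi -> Rzero_atleast f x m ->
  zero_list f lo hi zs -> zero_list f lo' hi ((x, m) :: zs).
Proof.
  intros Hx Hxhi Zx [Hs Hz]. split.
  - constructor; [exact Hs|]. eapply List.Forall_impl; [|exact Hz]. simpl. intros z [Hzr _]. lra.
  - constructor; [simpl; split; [lra|exact Zx]|].
    eapply List.Forall_impl; [|exact Hz]. intros z [Hzr Zz]. split; [lra|exact Zz].
Qed.

Lemma zero_list_Derive f lo hi zs : Rsmooth f -> zero_list f lo hi zs ->
  List.Forall (fun z => 1 <= snd z)%nat zs ->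
  exists zs', zero_list (Derive f) lo hi zs' /\ (total_mult zs <= total_mult zs' + 1)%nat.
Proof.
  intros Hf. revert lo. unfold zero_list, total_mult.
  induction zs as [|[x m] [|[y m'] zs] IH]; intros lo [Hs Hz] Hpos.
  - exists nil. repeat constructor.
  - inversion_clear Hz as [|? ? [Hx Zx] _]. exists ((x, (m - 1)%nat) :: nil). simpl in *.
    split; [|lia]. split; [repeat constructor|].
    constructor; [|constructor]. split; [exact Hx|apply Rzero_atleast_Derive, Zx].
  - inversion_clear Hs as [|? ? Hs' Hlt]. inversion_clear Hz as [|? ? [Hx Zx] Hz'].
    inversion_clear Hpos as [|? ? Hm Hpos']. inversion_clear Hlt as [|? ? Hxy _].
    inversion Hz' as [|? ? [Hy Zy] Hzs]. inversion Hs' as [|? ? _ Hylt].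
    inversion Hpos' as [|? ? Hm' _]. simpl in *.
    destruct (IH y) as [zs'' [[Hs'' Hz''] Htot]]; [split; [exact Hs'|]|assumption|].
    { constructor; [simpl; split; [lra|exact Zy]|].
      rewrite List.Forall_forall in *. intros z Hzin.
      specialize (Hzs z Hzin). specialize (Hylt z Hzin). simpl in *. split; [lra|apply Hzs]. }
    destruct (Rolle_Rsmooth f x y Hf Hxy) as [r [Hr Dr]];
      [exact (Rzero_atleast_value f x m Hm Zx)|exact (Rzero_atleast_value f y m' Hm' Zy)|].
    assert (Hge : forall z, In z zs'' -> y <= fst z).
    { rewrite List.Forall_forall in Hz''. intros z Hzin. apply Hz'', Hzin. }
    exists ((x, (m - 1)%nat) :: (r, 1%nat) :: zs''). simpl in *. split; [split|lia].
    + repeat constructor; try exact Hs''; try (simpl; lra);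
        apply List.Forall_forall; intros z Hzin; specialize (Hge z Hzin); simpl; lra.
    + constructor; [simpl; split; [lra|apply Rzero_atleast_Derive, Zx]|].
      constructor; [simpl; split; [lra|apply Rzero_atleast_1, Dr]|].
      eapply List.Forall_impl; [|exact Hz'']. intros z [Hzr Zz]. split; [lra|exact Zz].
Qed.

Lemma C_eq (u v : C) : fst u = fst v -> snd u = snd v -> u = v.
Proof. intros. apply injective_projections; assumption. Qed.

Lemma smooth_parts f : smooth f <-> Rsmooth (reP f) /\ Rsmooth (imP f).
Proof. split; [intros H; split; intros k x; apply H | intros [H1 H2] k x; split; auto]. Qed.

Lemma reP_Dop mu g x :
  reP (Dop mu g) x = Derive (reP g) x - (fst mu * reP g x - snd mu * imP g x).
Proof. unfold Dop, Dn, reP, imP. simpl. ring. Qed.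

Lemma imP_Dop mu g x :
  imP (Dop mu g) x = Derive (imP g) x - (fst mu * imP g x + snd mu * reP g x).
Proof. unfold Dop, Dn, reP, imP. simpl. ring. Qed.

Lemma smooth_Dop mu g : smooth g -> smooth (Dop mu g).
Proof.
  rewrite !smooth_parts. intros [Hre Him]. split.
  - apply (Rsmooth_ext (fun x => 1 * Derive (reP g) x +
      (-1) * (fst mu * reP g x + (- snd mu) * imP g x))).
    { intros x. rewrite reP_Dop. ring. }
    apply Rsmooth_lin, Rsmooth_lin; auto using Rsmooth_Derive.
  - apply (Rsmooth_ext (fun x => 1 * Derive (imP g) x +
      (-1) * (fst mu * imP g x + snd mu * reP g x))).
    { intros x. rewrite imP_Dop. ring. }
    apply Rsmooth_lin, Rsmooth_lin; auto using Rsmooth_Derive.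
Qed.

Lemma smooth_Lop mus f : smooth f -> smooth (Lop mus f).
Proof. induction mus as [|mu mus IH]; intros Hf; [exact Hf|apply smooth_Dop, IH, Hf]. Qed.

Lemma Derive_reP_Dop mu g x : smooth g -> Derive (reP (Dop mu g)) x =
  Derive (Derive (reP g)) x - (fst mu * Derive (reP g) x - snd mu * Derive (imP g) x).
Proof.
  rewrite smooth_parts. intros [Hre Him].
  rewrite (Derive_ext _ (fun y => 1 * Derive (reP g) y +
    (-1) * (fst mu * reP g y + (- snd mu) * imP g y))) by (intros; rewrite reP_Dop; ring).
  rewrite Derive_lin, Derive_lin by auto using Rsmooth_lin, Rsmooth_Derive. ring.
Qed.

Lemma Derive_imP_Dop mu g x : smooth g -> Derive (imP (Dop mu g)) x =
  Derive (Derive (imP g)) x - (fst mu * Derive (imP g) x + snd mu * Derive (reP g) x).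
Proof.
  rewrite smooth_parts. intros [Hre Him].
  rewrite (Derive_ext _ (fun y => 1 * Derive (imP g) y +
    (-1) * (fst mu * imP g y + snd mu * reP g y))) by (intros; rewrite imP_Dop; ring).
  rewrite Derive_lin, Derive_lin by auto using Rsmooth_lin, Rsmooth_Derive. ring.
Qed.

Lemma Dop_comm_real mu r f : smooth f -> Dop mu (Dop (RtoC r) f) = Dop (RtoC r) (Dop mu f).
Proof.
  intros Hf. apply functional_extensionality. intros x. apply C_eq.
  - change (reP (Dop mu (Dop (RtoC r) f)) x = reP (Dop (RtoC r) (Dop mu f)) x).
    rewrite !reP_Dop, !Derive_reP_Dop, ?reP_Dop, ?imP_Dop by exact Hf. simpl. ring.
  - change (imP (Dop mu (Dop (RtoC r) f)) x = imP (Dop (RtoC r) (Dop mu f)) x).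
    rewrite !imP_Dop, !Derive_imP_Dop, ?reP_Dop, ?imP_Dop by exact Hf. simpl. ring.
Qed.

Lemma Lop_comm_real mus r f : smooth f -> Lop mus (Dop (RtoC r) f) = Dop (RtoC r) (Lop mus f).
Proof.
  induction mus as [|mu mus IH]; intros Hf; [reflexivity|].
  simpl. rewrite IH by exact Hf. apply Dop_comm_real, smooth_Lop, Hf.
Qed.

Lemma Dop_lin mu s f t g : smooth f -> smooth g ->
  Dop mu (fun x => s * f x + t * g x)%C = (fun x => s * Dop mu f x + t * Dop mu g x)%C.
Proof.
  rewrite !smooth_parts. intros [Rf If] [Rg Ig]. apply functional_extensionality. intros x.
  apply C_eq.
  - change (reP (Dop mu (fun x => s * f x + t * g x)%C) x =
      fst s * reP (Dop mu f) x - snd s * imP (Dop mu f) x +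
      (fst t * reP (Dop mu g) x - snd t * imP (Dop mu g) x)).
    rewrite !reP_Dop, !imP_Dop.
    rewrite (Derive_ext _ (fun y => 1 * (fst s * reP f y + (- snd s) * imP f y) +
      1 * (fst t * reP g y + (- snd t) * imP g y))) by (intros; unfold reP, imP; simpl; ring).
    rewrite !Derive_lin by auto using Rsmooth_lin. unfold reP, imP. simpl. ring.
  - change (imP (Dop mu (fun x => s * f x + t * g x)%C) x =
      fst s * imP (Dop mu f) x + snd s * reP (Dop mu f) x +
      (fst t * imP (Dop mu g) x + snd t * reP (Dop mu g) x)).
    rewrite !reP_Dop, !imP_Dop.
    rewrite (Derive_ext _ (fun y => 1 * (fst s * imP f y + snd s * reP f y) +
      1 * (fst t * imP g y + snd t * reP g y))) by (intros; unfold reP, imP; simpl; ring).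
    rewrite !Derive_lin by auto using Rsmooth_lin. unfold reP, imP. simpl. ring.
Qed.

Lemma Lop_lin mus s f t g : smooth f -> smooth g ->
  Lop mus (fun x => s * f x + t * g x)%C = (fun x => s * Lop mus f x + t * Lop mus g x)%C.
Proof.
  induction mus as [|mu mus IH]; intros Hf Hg; [reflexivity|].
  simpl. rewrite IH by assumption. apply Dop_lin; apply smooth_Lop; assumption.
Qed.

Lemma inE_ext mus f g : (forall x, f x = g x) -> inE mus f -> inE mus g.
Proof. intros E Hf. replace g with f; [exact Hf|]. apply functional_extensionality, E. Qed.

Lemma smooth_lin s f t g : smooth f -> smooth g -> smooth (fun x => s * f x + t * g x)%C.
Proof.
  rewrite !smooth_parts. intros [Rf If] [Rg Ig]. split.
  - apply (Rsmooth_ext (fun x => 1 * (fst s * reP f x + (- snd s) * imP f x) +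
                                 1 * (fst t * reP g x + (- snd t) * imP g x))).
    { intros x. unfold reP, imP. simpl. ring. }
    apply Rsmooth_lin; apply Rsmooth_lin; assumption.
  - apply (Rsmooth_ext (fun x => 1 * (fst s * imP f x + snd s * reP f x) +
                                 1 * (fst t * imP g x + snd t * reP g x))).
    { intros x. unfold reP, imP. simpl. ring. }
    apply Rsmooth_lin; apply Rsmooth_lin; assumption.
Qed.

Lemma inE_lin mus s f t g : inE mus f -> inE mus g -> inE mus (fun x => s * f x + t * g x)%C.
Proof.
  intros [Sf Lf] [Sg Lg]. split; [apply smooth_lin; assumption|].
  intros x. rewrite Lop_lin, Lf, Lg by assumption. apply C_eq; simpl; ring.
Qed.

Lemma Lop_zero mus : Lop mus (fun _ => RtoC 0) = (fun _ => RtoC 0).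
Proof.
  induction mus as [|mu mus IH]; [reflexivity|]. simpl. rewrite IH.
  apply functional_extensionality. intros x. apply C_eq.
  - change (reP (Dop mu (fun _ => RtoC 0)) x = 0). rewrite reP_Dop.
    unfold reP, imP. simpl. rewrite Derive_const. ring.
  - change (imP (Dop mu (fun _ => RtoC 0)) x = 0). rewrite imP_Dop.
    unfold reP, imP. simpl. rewrite Derive_const. ring.
Qed.

Lemma inE_zero mus : inE mus (fun _ => RtoC 0).
Proof.
  split; [|intros x; rewrite Lop_zero; reflexivity].
  apply smooth_parts. split; apply (Rsmooth_ext (fun _ => 0)); try reflexivity; apply Rsmooth_const.
Qed.

Fixpoint lincomb (be : nat -> R) (f : nat -> R -> R) (m : nat) (x : R) : R :=
  match m with
  | O => 0
  | S m' => lincomb be f m' x + be m' * f m' x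
  end.

Lemma lincomb_ext_coef be be' f m x : (forall j, (j < m)%nat -> be j = be' j) ->
  lincomb be f m x = lincomb be' f m x.
Proof.
  induction m as [|m IH]; intros E; [reflexivity|]. simpl.
  rewrite IH, (E m) by (lia || (intros; apply E; lia)). reflexivity.
Qed.

Lemma lincomb_minus be ga f m x :
  lincomb (fun j => be j - ga j) f m x = lincomb be f m x - lincomb ga f m x.
Proof. induction m as [|m IH]; simpl; [ring|rewrite IH; ring]. Qed.

Lemma lincomb_zero_coef be f m x : (forall j, (j < m)%nat -> be j = 0) -> lincomb be f m x = 0.
Proof.
  induction m as [|m IH]; intros E; [reflexivity|]. simpl.
  rewrite IH, (E m) by (lia || (intros; apply E; lia)). ring.
Qed.

Lemma lincomb_trunc be f k m x : (k <= m)%nat ->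
  (forall j, (k <= j < m)%nat -> f j x = 0) -> lincomb be f m x = lincomb be f k x.
Proof.
  induction m as [|m IH]; intros Hkm Hz.
  - replace k with 0%nat by lia. reflexivity.
  - destruct (Nat.eq_dec k (S m)) as [->|Hne]; [reflexivity|].
    simpl. rewrite IH, Hz by (lia || (intros; apply Hz; lia)). ring.
Qed.

Lemma Rsmooth_lincomb be f m : (forall j, (j < m)%nat -> Rsmooth (f j)) ->
  Rsmooth (lincomb be f m).
Proof.
  induction m as [|m IH]; intros Hf; [exact (Rsmooth_const 0)|].
  apply (Rsmooth_ext (fun x => 1 * lincomb be f m x + be m * f m x)); [intros; simpl; ring|].
  apply Rsmooth_lin; [apply IH; intros; apply Hf; lia|apply Hf; lia].
Qed.

Lemma Derive_n_lincomb be f m i x : (forall j, (j < m)%nat -> Rsmooth (f j)) ->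
  Derive_n (lincomb be f m) i x = lincomb be (fun j => Derive_n (f j) i) m x.
Proof.
  induction m as [|m IH]; intros Hf.
  - destruct i; [reflexivity|exact (Derive_n_const i 0 x)].
  - simpl. rewrite (Derive_n_ext _ (fun x => 1 * lincomb be f m x + be m * f m x))
      by (intros; simpl; ring).
    assert (Hfm : Rsmooth (f m)) by (apply Hf; lia).
    assert (Hlow : forall j, (j < m)%nat -> Rsmooth (f j)) by (intros; apply Hf; lia).
    rewrite Derive_n_lin, IH by auto using Rsmooth_lincomb. ring.
Qed.

Lemma zero_atleast_RtoC (f : R -> R) c m :
  Rzero_atleast f c m -> zero_atleast (fun x => RtoC (f x)) c m.
Proof.
  intros Hf j Hj. unfold Dn. apply C_eq; simpl.
  - rewrite <- (Hf j Hj). apply Derive_n_ext. reflexivity.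
  - rewrite (Derive_n_ext _ (fun _ => 0)) by reflexivity.
    destruct j; [reflexivity|apply Derive_n_const].
Qed.

Section Reproduction.

Variables (a b l0 : R) (n : nat) (F : list C) (p : nat -> R -> C).
Hypothesis Hab : a < b.
Hypothesis Hn : (2 <= n)%nat.
Hypothesis F_dim : length F = (n - 1)%nat.
Hypothesis F_cheb : ext_chebyshev F a b.
Hypothesis F_conj : conj_closed F.
Hypothesis p_basis : bernstein_basis (RtoC l0 :: RtoC l0 :: F) a b n p.
Hypothesis p_real_nonneg :
  forall k x, (k <= n)%nat -> a <= x <= b -> snd (p k x) = 0 /\ 0 <= fst (p k x).

Definition P j := reP (p j).
Definition exp_l0 x := exp (l0 * x).
Definition xexp_l0 x := x * exp (l0 * x).
Definition damp (H : R -> R) x := H x * exp (- l0 * x).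
(* [Dl0sq] is (d/dx - l0)^2; [realE H] holds for the real parts of elements of
   E_(l0,l0,F), and it is all that is used about them. *)
Definition Dl0sq (H : R -> R) x :=
  Derive (Derive H) x - 2 * l0 * Derive H x + l0 * l0 * H x.
Definition inF (phi : R -> R) := inE F (fun x => RtoC (phi x)).
Definition realE (H : R -> R) := Rsmooth H /\ inF (Dl0sq H).

Lemma exp_l0_cancel x : exp (l0 * x) * exp (- l0 * x) = 1.
Proof. rewrite <- exp_plus. replace (l0 * x + - l0 * x) with 0 by ring. apply exp_0. Qed.

Lemma Rsmooth_exp_l0 : Rsmooth exp_l0.
Proof. apply Rsmooth_exp_scal. Qed.

Lemma Rsmooth_xexp_l0 : Rsmooth xexp_l0.
Proof. apply (Rsmooth_mult (fun x => x) exp_l0 Rsmooth_id Rsmooth_exp_l0). Qed.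

Lemma Rsmooth_damp H : Rsmooth H -> Rsmooth (damp H).
Proof. intros HH. apply (Rsmooth_mult H); [exact HH|apply Rsmooth_exp_scal]. Qed.

Lemma damp_zero_atleast H c m : Rsmooth H -> Rzero_atleast H c m ->
  Rzero_atleast (damp H) c m /\ Derive_n (damp H) m c = Derive_n H m c * exp (- l0 * c).
Proof. intros SH ZH. exact (Rzero_atleast_mult m H _ c SH (Rsmooth_exp_scal (- l0)) ZH). Qed.

Lemma damp_exp_l0 x : damp exp_l0 x = 1.
Proof. apply exp_l0_cancel. Qed.

Lemma damp_xexp_l0 x : damp xexp_l0 x = x.
Proof. unfold damp, xexp_l0. rewrite Rmult_assoc, exp_l0_cancel. ring. Qed.

Lemma Derive_exp_l0 x : Derive exp_l0 x = l0 * exp_l0 x.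
Proof. apply is_derive_unique. unfold exp_l0. auto_derive; [exact I|ring]. Qed.

Lemma Derive_xexp_l0 x : Derive xexp_l0 x = exp_l0 x + l0 * xexp_l0 x.
Proof. apply is_derive_unique. unfold exp_l0, xexp_l0. auto_derive; [exact I|ring]. Qed.

Lemma inF_ext f g : (forall x, f x = g x) -> inF f -> inF g.
Proof. intros E. apply inE_ext. intros x. rewrite E. reflexivity. Qed.

Lemma inF_lin u f v g : inF f -> inF g -> inF (fun x => u * f x + v * g x).
Proof.
  intros Hf Hg. apply (inE_ext F (fun x => RtoC u * RtoC (f x) + RtoC v * RtoC (g x))%C).
  - intros x. apply C_eq; simpl; ring.
  - apply inE_lin; assumption.
Qed.

Lemma Dl0sq_ext f g x : (forall y, f y = g y) -> Dl0sq f x = Dl0sq g x.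
Proof.
  intros E. unfold Dl0sq. rewrite E, (Derive_ext f g) by exact E.
  rewrite (Derive_ext (Derive f) (Derive g)); [reflexivity|].
  intros y. apply Derive_ext, E.
Qed.

Lemma Dl0sq_lin u f v g x : Rsmooth f -> Rsmooth g ->
  Dl0sq (fun y => u * f y + v * g y) x = u * Dl0sq f x + v * Dl0sq g x.
Proof.
  intros Hf Hg. unfold Dl0sq.
  rewrite (Derive_ext (Derive (fun y => u * f y + v * g y))
    (fun y => u * Derive f y + v * Derive g y)) by (intros; apply Derive_lin; assumption).
  rewrite !Derive_lin by auto using Rsmooth_Derive. ring.
Qed.

Lemma realE_ext f g : (forall y, f y = g y) -> realE f -> realE g.
Proof.
  intros E [Sf Ff]. split; [exact (Rsmooth_ext f g E Sf)|].
  apply (inF_ext (Dl0sq f)); [intros; apply Dl0sq_ext, E|exact Ff].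
Qed.

Lemma realE_lin u f v g : realE f -> realE g -> realE (fun y => u * f y + v * g y).
Proof.
  intros [Sf Ff] [Sg Fg]. split; [apply Rsmooth_lin; assumption|].
  apply (inF_ext (fun x => u * Dl0sq f x + v * Dl0sq g x)).
  - intros x. symmetry. apply Dl0sq_lin; assumption.
  - apply inF_lin; assumption.
Qed.

Lemma realE_kernel H : Rsmooth H -> (forall x, Dl0sq H x = 0) -> realE H.
Proof.
  intros SH Hker. split; [exact SH|]. apply (inE_ext F (fun _ => RtoC 0)); [|apply inE_zero].
  intros x. rewrite Hker. reflexivity.
Qed.

Lemma realE_zero : realE (fun _ => 0).
Proof.
  apply realE_kernel; [apply Rsmooth_const|]. intros x. unfold Dl0sq.
  rewrite (Derive_ext (Derive (fun _ => 0)) (fun _ => 0)) by (intros; apply Derive_const).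
  rewrite !Derive_const. ring.
Qed.

Lemma realE_exp_l0 : realE exp_l0.
Proof.
  apply realE_kernel; [apply Rsmooth_exp_l0|]. intros x. unfold Dl0sq.
  rewrite (Derive_ext (Derive exp_l0) (fun y => l0 * exp_l0 y)) by apply Derive_exp_l0.
  rewrite Derive_scal, !Derive_exp_l0. ring.
Qed.

Lemma realE_xexp_l0 : realE xexp_l0.
Proof.
  apply realE_kernel; [apply Rsmooth_xexp_l0|]. intros x. unfold Dl0sq.
  rewrite (Derive_ext (Derive xexp_l0) (fun y => 1 * exp_l0 y + l0 * xexp_l0 y))
    by (intros; rewrite Derive_xexp_l0; ring).
  rewrite Derive_lin, Derive_exp_l0, !Derive_xexp_l0
    by (apply Rsmooth_exp_l0 || apply Rsmooth_xexp_l0).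
  ring.
Qed.

Lemma reP_Dl0_Dl0 f x : smooth f ->
  reP (Dop (RtoC l0) (Dop (RtoC l0) f)) x = Dl0sq (reP f) x.
Proof.
  intros Hf. rewrite reP_Dop, Derive_reP_Dop, reP_Dop by exact Hf. unfold Dl0sq. simpl. ring.
Qed.

(* (d/dx - l0)^2 p_j lies in E_F since the factors of the operator commute, and so does its
   real part since E_F is closed under conjugation. *)
Lemma realE_P j : (j <= n)%nat -> realE (P j).
Proof.
  intros Hj. destruct (p_basis j Hj) as [[Sp Lp] _].
  set (phi := Dop (RtoC l0) (Dop (RtoC l0) (p j))).
  assert (Fphi : inE F phi).
  { split; [apply smooth_Dop, smooth_Dop, Sp|].
    intros x. unfold phi. rewrite Lop_comm_real, Lop_comm_real by auto using smooth_Dop.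
    exact (Lp x). }
  assert (Ephi : forall x, fst (phi x) = Dl0sq (P j) x) by (intros; apply reP_Dl0_Dl0, Sp).
  clearbody phi.
  split; [exact (proj1 (proj1 (smooth_parts _) Sp))|].
  apply (inE_ext F (fun x => RtoC (/ 2) * phi x + RtoC (/ 2) * Cconj (phi x))%C).
  - intros x. rewrite <- Ephi. destruct (phi x) as [u v].
    apply C_eq; simpl; field.
  - apply inE_lin; [exact Fphi|exact (F_conj phi Fphi)].
Qed.

Lemma Dl0sq_damp H x : Rsmooth H -> Dl0sq H x = Derive (Derive (damp H)) x * exp (l0 * x).
Proof.
  intros SH.
  assert (D1 : forall y, Derive (damp H) y = (Derive H y - l0 * H y) * exp (- l0 * y)).
  { intros y. apply is_derive_unique. unfold damp. auto_derive; [apply Rsmooth_ex_derive, SH|].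
    change (Derive (fun y => H y) y) with (Derive H y). ring. }
  rewrite (Derive_ext _ _ x D1).
  replace (Derive (fun y => (Derive H y - l0 * H y) * exp (- l0 * y)) x) with
    ((Derive (Derive H) x - 2 * l0 * Derive H x + l0 * l0 * H x) * exp (- l0 * x)).
  - unfold Dl0sq. rewrite <- (Rmult_1_r (_ - _ + _)) at 1. rewrite <- (exp_l0_cancel x). ring.
  - symmetry. apply is_derive_unique. auto_derive.
    + repeat split; [apply Rsmooth_ex_derive, Rsmooth_Derive, SH|apply Rsmooth_ex_derive, SH].
    + change (Derive (fun y => Derive H y) x) with (Derive (Derive H) x).
      change (Derive (fun y => H y) x) with (Derive H x). ring.
Qed.

(* By [Dl0sq_damp] the zeros of (damp H)'' are zeros of an element of the extended
   Chebyshev space E_F of dimension n - 1. *)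
Lemma realE_damp_Derive2_vanish H zs : realE H ->
  zero_list (Derive (Derive (damp H))) a b zs -> (n - 1 <= total_mult zs)%nat ->
  forall x, a <= x <= b -> Derive (Derive (damp H)) x = 0.
Proof.
  intros [SH FH] Hzs Htot x Hx.
  assert (Epsi : forall y, Dl0sq H y = Derive (Derive (damp H)) y * exp (l0 * y))
    by (intros; apply Dl0sq_damp, SH).
  destruct (Req_dec (Dl0sq H x) 0) as [E|E].
  - rewrite Epsi in E. pose proof (exp_pos (l0 * x)). nra.
  - exfalso. cut (total_mult zs <= length F - 1)%nat; [rewrite F_dim; lia|].
    apply (F_cheb _ FH); [|exact (zero_list_NoDup _ _ _ _ Hzs)|].
    + exists x. split; [exact Hx|]. intros E'. apply E. exact (f_equal fst E').
    + destruct Hzs as [_ Hzs]. eapply List.Forall_impl; [|exact Hzs].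
      intros [c m] [Hc Zc]. split; [exact Hc|]. apply zero_atleast_RtoC.
      apply (Rzero_atleast_ext (fun y => Derive (Derive (damp H)) y * exp (l0 * y)));
        [intros; symmetry; apply Epsi|].
      apply Rzero_atleast_mult; auto using Rsmooth_Derive, Rsmooth_damp, Rsmooth_exp_scal.
Qed.

Lemma realE_damp_Derive_vanish H zs : realE H ->
  zero_list (Derive (damp H)) a b zs -> (n <= total_mult zs)%nat ->
  forall x, a <= x <= b -> Derive (Derive (damp H)) x = 0.
Proof.
  intros HH Hzs Htot.
  destruct (zero_list_filter_pos _ _ _ _ Hzs) as [Hzs' [Hpos Htot']].
  destruct (zero_list_Derive _ _ _ _ (Rsmooth_Derive _ (Rsmooth_damp H (proj1 HH))) Hzs' Hpos)
    as [zs'' [Hzs'' Htot'']].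
  apply (realE_damp_Derive2_vanish H zs'' HH Hzs''). lia.
Qed.


Lemma Rsmooth_P j : (j <= n)%nat -> Rsmooth (P j).
Proof. intros Hj. exact (proj1 (realE_P j Hj)). Qed.

Lemma P_zero_a j : (j <= n)%nat -> Rzero_atleast (P j) a j.
Proof.
  intros Hj i Hi. destruct (p_basis j Hj) as [_ [[Hz _] _]]. exact (f_equal fst (Hz i Hi)).
Qed.

Lemma P_zero_b j : (j <= n)%nat -> Rzero_atleast (P j) b (n - j).
Proof.
  intros Hj i Hi. destruct (p_basis j Hj) as [_ [_ [Hz _]]]. exact (f_equal fst (Hz i Hi)).
Qed.

Lemma imP_p_Derive_n_endpoints j i : (j <= n)%nat ->
  Derive_n (imP (p j)) i a = 0 /\ Derive_n (imP (p j)) i b = 0.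
Proof.
  intros Hj. destruct (p_basis j Hj) as [[Sp _] _].
  apply vanishing_Derive_n_endpoints; [exact (proj2 (proj1 (smooth_parts _) Sp))|exact Hab|].
  intros x Hx. exact (proj1 (p_real_nonneg j x Hj Hx)).
Qed.

Lemma P_lead_a_pos j : (j <= n)%nat -> 0 < Derive_n (P j) j a.
Proof.
  intros Hj. apply (leading_Derive_pos_right _ a b); auto using Rsmooth_P, P_zero_a.
  - intros E. destruct (p_basis j Hj) as [_ [[_ Hnz] _]]. apply Hnz.
    apply C_eq; [exact E|apply (imP_p_Derive_n_endpoints j j Hj)].
  - intros x Hx. apply (p_real_nonneg j x Hj). lra.
Qed.

Lemma P_lead_b_pos j : (j <= n)%nat -> 0 < (-1) ^ (n - j) * Derive_n (P j) (n - j) b.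
Proof.
  intros Hj. apply (leading_Derive_pos_left _ a b); auto using Rsmooth_P, P_zero_b.
  - intros E. destruct (p_basis j Hj) as [_ [_ [_ Hnz]]]. apply Hnz.
    apply C_eq; [exact E|apply (imP_p_Derive_n_endpoints j (n - j) Hj)].
  - intros x Hx. apply (p_real_nonneg j x Hj). lra.
Qed.

Definition comb (be : nat -> R) (m : nat) : R -> R := lincomb be P m.

Lemma Rsmooth_comb be m : (m <= S n)%nat -> Rsmooth (comb be m).
Proof. intros Hm. apply Rsmooth_lincomb. intros j Hj. apply Rsmooth_P. lia. Qed.

Lemma realE_comb be m : (m <= S n)%nat -> realE (comb be m).
Proof.
  induction m as [|m IH]; intros Hm; [exact realE_zero|].
  apply (realE_ext (fun x => 1 * comb be m x + be m * P m x)); [intros; unfold comb; simpl; ring|].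
  apply realE_lin; [apply IH; lia|apply realE_P; lia].
Qed.

Lemma Derive_n_comb be m i x : (m <= S n)%nat ->
  Derive_n (comb be m) i x = lincomb be (fun j => Derive_n (P j) i) m x.
Proof. intros Hm. apply Derive_n_lincomb. intros j Hj. apply Rsmooth_P. lia. Qed.

Lemma Derive_n_comb_a be m i : (i < m <= S n)%nat ->
  Derive_n (comb be m) i a = lincomb be (fun j => Derive_n (P j) i) (S i) a.
Proof.
  intros Him. rewrite Derive_n_comb by lia. apply lincomb_trunc; [lia|].
  intros j Hj. apply P_zero_a; lia.
Qed.

Lemma comb_zero_b be m : (m <= n)%nat -> Rzero_atleast (comb be m) b (S (n - m)).
Proof.
  intros Hm i Hi. rewrite Derive_n_comb by lia.
  rewrite (lincomb_trunc _ _ 0) by (lia || (intros j Hj; apply P_zero_b; lia)). reflexivity.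
Qed.

Lemma Derive_n_comb_b_lead be k : (k <= n)%nat ->
  Derive_n (comb be (S k)) (n - k) b = be k * Derive_n (P k) (n - k) b.
Proof.
  intros Hk. rewrite Derive_n_comb by lia. simpl.
  rewrite (lincomb_trunc _ _ 0) by (lia || (intros j Hj; apply P_zero_b; lia)). simpl. ring.
Qed.

Definition rem (T : R -> R) (be : nat -> R) (m : nat) x := T x - comb be m x.

(* [be] matches T to order n at a; it is found by back substitution because P_j vanishes to
   order exactly j at a. *)
Definition interpolant (T : R -> R) (be : nat -> R) := Rzero_atleast (rem T be (S n)) a (S n).

Lemma Derive_n_rem T be m i x : Rsmooth T -> (m <= S n)%nat ->
  Derive_n (rem T be m) i x = Derive_n T i x - Derive_n (comb be m) i x.
Proof.
  intros HT Hm. apply Derive_n_minus; [exact HT|apply Rsmooth_comb, Hm].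
Qed.

Lemma Rsmooth_rem T be m : Rsmooth T -> (m <= S n)%nat -> Rsmooth (rem T be m).
Proof. intros HT Hm. apply Rsmooth_minus; [exact HT|apply Rsmooth_comb, Hm]. Qed.

Lemma interpolant_exists T : Rsmooth T -> exists be, interpolant T be.
Proof.
  intros HT. unfold interpolant.
  cut (forall m, (m <= S n)%nat -> exists be, Rzero_atleast (rem T be m) a m); [auto|].
  induction m as [|m IH]; intros Hm; [exists (fun _ => 0); intros j Hj; lia|].
  destruct (IH ltac:(lia)) as [be Hbe].
  set (ga := Derive_n (rem T be m) m a / Derive_n (P m) m a).
  set (be' := fun j => if Nat.eqb j m then ga else be j).
  assert (Hcomb : forall x, lincomb be' P m x = lincomb be P m x).
  { intros x. apply lincomb_ext_coef. intros j Hj. unfold be'.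
    destruct (Nat.eqb_spec j m); [lia|reflexivity]. }
  assert (Hstep : forall i, Derive_n (rem T be' (S m)) i a =
                            Derive_n (rem T be m) i a - ga * Derive_n (P m) i a).
  { intros i. rewrite (Derive_n_ext _ (fun y => 1 * rem T be m y + (- ga) * P m y)).
    - rewrite Derive_n_lin; [ring| |apply Rsmooth_P; lia].
      apply Rsmooth_rem; [exact HT|lia].
    - intros y. unfold rem, comb. simpl. rewrite Hcomb. unfold be'. rewrite Nat.eqb_refl. ring. }
  exists be'. intros i Hi. rewrite Hstep.
  destruct (Nat.eq_dec i m) as [->|Hne].
  - unfold ga. field. apply Rgt_not_eq, P_lead_a_pos. lia.
  - rewrite Hbe, (P_zero_a m) by lia. ring.
Qed.

Lemma realE_vanish_of_zero_a H : realE H -> Rzero_atleast H a (S n) ->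
  forall x, a <= x <= b -> H x = 0.
Proof.
  intros HH ZH x Hx. set (w := damp H).
  assert (Sw : Rsmooth w) by apply Rsmooth_damp, HH.
  assert (Zw : Rzero_atleast w a (S n)) by apply (damp_zero_atleast H a (S n) (proj1 HH) ZH).
  assert (Zw1 := Rzero_atleast_Derive _ _ _ Zw).
  assert (Zw2 := Rzero_atleast_Derive _ _ _ Zw1).
  assert (D2 : forall y, a <= y <= b -> Derive (Derive w) y = 0).
  { apply (realE_damp_Derive2_vanish H ((a, (S n - 1 - 1)%nat) :: nil) HH).
    - solve_zero_list.
    - unfold total_mult. simpl. lia. }
  assert (Ew : w x = w a).
  { apply (Derive2_zero_const w a b a Sw D2); [lra| |exact Hx].
    apply (Rzero_atleast_value _ a (S n - 1)); [lia|exact Zw1]. }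
  rewrite (Rzero_atleast_value w a (S n)) in Ew by (lia || exact Zw).
  unfold w, damp in Ew. pose proof (exp_pos (- l0 * x)). nra.
Qed.

Section Interpolant.

Variables (T : R -> R) (be : nat -> R).
Hypothesis T_smooth : Rsmooth T.
Hypothesis T_interp : interpolant T be.

Lemma interpolant_Derive_n_a i : (i <= n)%nat ->
  Derive_n T i a = lincomb be (fun j => Derive_n (P j) i) (S i) a.
Proof.
  intros Hi. specialize (T_interp i ltac:(lia)). rewrite Derive_n_rem in T_interp by auto.
  rewrite <- Derive_n_comb_a with (m := S n) by lia. lra.
Qed.

Lemma interpolant_rem_zero k : (k <= n)%nat -> Rzero_atleast (rem T be (S k)) a (S k).
Proof.
  intros Hk i Hi. rewrite Derive_n_rem, Derive_n_comb_a, interpolant_Derive_n_a by (auto; lia).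
  ring.
Qed.

Lemma interpolant_rem_lead k : (k < n)%nat ->
  Derive_n (rem T be (S k)) (S k) a = be (S k) * Derive_n (P (S k)) (S k) a.
Proof.
  intros Hk. rewrite Derive_n_rem, Derive_n_comb, interpolant_Derive_n_a by (auto; lia).
  simpl. ring.
Qed.

Lemma interpolant_at_a : T a = be 0%nat * P 0%nat a.
Proof.
  pose proof (Rzero_atleast_value _ a 1 (le_n 1) (interpolant_rem_zero 0 ltac:(lia))) as E.
  unfold rem, comb in E. simpl in E. lra.
Qed.

Lemma interpolant_eq : realE T -> forall x, a <= x <= b -> T x = comb be (S n) x.
Proof.
  intros HT x Hx. apply Rminus_diag_uniq.
  apply (realE_vanish_of_zero_a (rem T be (S n))); [|exact T_interp|exact Hx].
  apply (realE_ext (fun y => 1 * T y + (-1) * comb be (S n) y)); [intros; unfold rem; ring|].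
  apply realE_lin; [exact HT|apply realE_comb; lia].
Qed.

Lemma interpolant_at_b : realE T -> T b = be n * P n b.
Proof.
  intros HT. rewrite interpolant_eq by (auto; lra).
  change (comb be (S n) b) with (comb be n b + be n * P n b).
  rewrite (Rzero_atleast_value (comb be n) b (S (n - n))) by (lia || apply comb_zero_b; lia).
  ring.
Qed.

End Interpolant.

Lemma comb_inj be ga : (forall x, a <= x <= b -> comb be (S n) x = comb ga (S n) x) ->
  forall j, (j <= n)%nat -> be j = ga j.
Proof.
  intros E. set (de := fun j => be j - ga j).
  assert (Hde : forall x, a <= x <= b -> comb de (S n) x = 0).
  { intros x Hx. unfold comb, de. rewrite lincomb_minus. apply Rminus_diag_eq, E, Hx. }
  enough (Hz : forall j, (j <= n)%nat -> de j = 0)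
    by (intros j Hj; specialize (Hz j Hj); unfold de in Hz; lra).
  intros j. induction j as [j IH] using (well_founded_induction Wf_nat.lt_wf). intros Hj.
  destruct (vanishing_Derive_n_endpoints _ a b (Rsmooth_comb de (S n) (le_n _)) Hab Hde j)
    as [Ej _].
  rewrite Derive_n_comb_a in Ej by lia. simpl in Ej.
  rewrite lincomb_zero_coef in Ej by (intros i Hi; apply IH; lia).
  pose proof (P_lead_a_pos j Hj). nra.
Qed.

(* A zero of (damp H)' inside (a,b), or one of order k + 1 at a, would give (damp H)'' at
   least n - 1 zeros, hence make damp H constant. So (damp H)' has the sign of
   damp H b - damp H a on (a,b). *)
Lemma damp_Derive_lead_neg H k : realE H -> (k < n)%nat ->
  Rzero_atleast (Derive (damp H)) a k -> Rzero_atleast (Derive (damp H)) b (n - S k) ->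
  damp H b < damp H a -> Derive_n (Derive (damp H)) k a < 0.
Proof.
  intros HH Hk Za Zb Hdec. set (w := damp H) in *. set (g := Derive w) in *.
  assert (Sw : Rsmooth w) by apply Rsmooth_damp, HH.
  assert (Sg : Rsmooth g) by apply Rsmooth_Derive, Sw.
  assert (not_flat : forall y, a <= y <= b -> g y = 0 ->
                     ~ (forall x, a <= x <= b -> Derive g x = 0)).
  { intros y Hy gy D2. pose proof (Derive2_zero_const w a b y Sw D2 Hy gy b). lra. }
  assert (no_zero : forall z, a < z < b -> g z <> 0).
  { intros z Hz gz. apply (not_flat z); [lra|exact gz|].
    assert (Zz := Rzero_atleast_1 g z gz).
    apply (realE_damp_Derive_vanish H ((a, k) :: (z, 1%nat) :: (b, (n - S k)%nat) :: nil) HH);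
      [solve_zero_list|unfold total_mult; simpl; lia]. }
  assert (lead_nz : Derive_n g k a <> 0).
  { intros E. assert (Za' := Rzero_atleast_S g a k Za E).
    apply (not_flat a); [lra|exact (Rzero_atleast_value g a (S k) ltac:(lia) Za')|].
    apply (realE_damp_Derive_vanish H ((a, S k) :: (b, (n - S k)%nat) :: nil) HH);
      [solve_zero_list|unfold total_mult; simpl; lia]. }
  assert (g_neg : forall x, a < x < b -> g x < 0).
  { destruct (MVT_Rsmooth w a b Sw Hab) as [xi [Hxi Exi]].
    fold g in Exi. assert (Hxi_neg : 0 < - g xi) by nra.
    intros x Hx. enough (0 < - g x) by lra.
    apply (positive_on_open (fun y => - g y) a b xi); [| |exact Hxi_neg| |exact Hx]; [|lra|].
    - apply continuity_opp. intros y. apply Rsmooth_continuity_pt, Sg.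
    - intros z Hz E. apply (no_zero z Hz). lra. }
  apply (leading_Derive_neg_right g a b k Hab Sg Za lead_nz).
  intros x Hx. apply Rlt_le, g_neg, Hx.
Qed.

Lemma damp_partial_exp_l0_a c k : interpolant exp_l0 c -> (k < n)%nat ->
  damp (comb c (S k)) a = 1 /\ Rzero_atleast (Derive (damp (comb c (S k)))) a k /\
  Derive_n (Derive (damp (comb c (S k)))) k a =
    - (c (S k) * Derive_n (P (S k)) (S k) a * exp (- l0 * a)).
Proof.
  intros Hc Hk. set (Q := rem exp_l0 c (S k)). set (H := comb c (S k)).
  assert (SQ : Rsmooth Q) by (apply Rsmooth_rem; [apply Rsmooth_exp_l0|lia]).
  assert (Ew : forall x, damp H x = 1 - damp Q x).
  { intros x. rewrite <- (damp_exp_l0 x). unfold damp, Q, rem, H. ring. }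
  assert (Dw : forall i, Derive_n (Derive (damp H)) i a = - Derive_n (damp Q) (S i) a).
  { intros i. rewrite <- Derive_n_S_Derive, (Derive_n_ext _ _ _ _ Ew).
    rewrite Derive_n_minus by auto using Rsmooth_const, Rsmooth_damp.
    rewrite Derive_n_const. ring. }
  destruct (damp_zero_atleast Q a (S k) SQ
    (interpolant_rem_zero exp_l0 c Rsmooth_exp_l0 Hc k ltac:(lia))) as [ZQ LQ].
  split; [|split].
  - rewrite Ew, (Rzero_atleast_value (damp Q) a (S k)) by (lia || exact ZQ). ring.
  - intros i Hi. rewrite Dw, ZQ by lia. ring.
  - rewrite Dw, LQ. unfold Q. rewrite interpolant_rem_lead by auto using Rsmooth_exp_l0. ring.
Qed.

Lemma interpolant_exp_l0_coef_pos c : interpolant exp_l0 c -> forall k, (k <= n)%nat -> 0 < c k.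
Proof.
  intros Hc [|k] Hk.
  - pose proof (interpolant_at_a exp_l0 c Rsmooth_exp_l0 Hc).
    pose proof (P_lead_a_pos 0 (Nat.le_0_l n)). pose proof (exp_pos (l0 * a)).
    unfold exp_l0 in *. simpl in *. nra.
  - destruct (damp_partial_exp_l0_a c k Hc Hk) as [Wa [Za La]].
    destruct (damp_zero_atleast _ b _ (Rsmooth_comb c (S k) ltac:(lia)) (comb_zero_b c (S k) Hk))
      as [Zb _].
    assert (Hneg := damp_Derive_lead_neg _ k (realE_comb c (S k) ltac:(lia)) ltac:(lia) Za).
    rewrite La in Hneg.
    assert (Hlead : 0 < Derive_n (P (S k)) (S k) a * exp (- l0 * a))
      by (apply Rmult_lt_0_compat; [apply P_lead_a_pos, Hk|apply exp_pos]).
    enough (0 < c (S k) * (Derive_n (P (S k)) (S k) a * exp (- l0 * a))) by nra.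
    rewrite <- Rmult_assoc. apply Ropp_lt_cancel. rewrite Ropp_0. apply Hneg.
    + replace (n - S k)%nat with (S (n - S k) - 1)%nat by lia. apply Rzero_atleast_Derive, Zb.
    + rewrite Wa, (Rzero_atleast_value _ b (S (n - S k))) by (lia || exact Zb). lra.
Qed.

Lemma damp_neg_before_b G k : realE G -> (k < n)%nat ->
  0 < Derive (damp G) a -> Rzero_atleast (Derive (Derive (damp G))) a k ->
  Rzero_atleast (Derive (damp G)) b (n - S k) -> damp G b = 0 ->
  forall y, a <= y < b -> damp G y < 0.
Proof.
  intros HG Hk Ha Za Zb Hb. set (w := damp G) in *. set (g := Derive w) in *.
  assert (Sw : Rsmooth w) by apply Rsmooth_damp, HG.
  assert (Sg : Rsmooth g) by apply Rsmooth_Derive, Sw.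
  assert (no_zero : forall z, a < z < b -> g z <> 0).
  { intros z Hz gz. assert (Zz := Rzero_atleast_1 g z gz).
    assert (Hzs : zero_list g z b ((z, 1%nat) :: (b, (n - S k)%nat) :: nil)) by solve_zero_list.
    destruct (zero_list_filter_pos _ _ _ _ Hzs) as [Hzs' [Hpos Htot]].
    destruct (zero_list_Derive _ _ _ _ Sg Hzs' Hpos) as [zs'' [Hzs'' Htot'']].
    assert (D2 : forall x, a <= x <= b -> Derive g x = 0).
    { apply (realE_damp_Derive2_vanish G ((a, k) :: zs'') HG).
      - apply (zero_list_cons _ a z); [lra|lra|exact Za|exact Hzs''].
      - unfold total_mult in *. simpl in *. lia. }
    pose proof (Derive_zero_const g a b Sg D2 z ltac:(lra)). lra. }
  assert (g_pos : forall x, a < x < b -> 0 < g x).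
  { apply (positive_on_open g a b a); [|lra|exact Ha|exact no_zero].
    intros x. apply Rsmooth_continuity_pt, Sg. }
  intros y Hy. destruct (MVT_Rsmooth w y b Sw ltac:(lra)) as [xi [Hxi Exi]].
  fold g in Exi. pose proof (g_pos xi ltac:(lra)). nra.
Qed.

Lemma fold_right_Cplus_init (v : C) l :
  fold_right Cplus v l = Cplus (fold_right Cplus (RtoC 0) l) v.
Proof. induction l as [|u l IH]; simpl; [|rewrite IH]; apply C_eq; simpl; ring. Qed.

Lemma Bop_comb t alpha f x : a <= x <= b ->
  Bop n t alpha p f x = RtoC (comb (fun k => f (t k) * alpha k) (S n) x).
Proof.
  intros Hx. unfold Bop.
  enough (Hm : forall m, (m <= S n)%nat ->
    fold_right Cplus (RtoC 0) (map (fun k => Cmult (RtoC (f (t k) * alpha k)) (p k x)) (seq 0 m)) =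
    RtoC (comb (fun k => f (t k) * alpha k) m x)) by (apply Hm; lia).
  induction m as [|m IH]; intros Hm; [reflexivity|].
  rewrite seq_S, map_app, fold_right_app. simpl. rewrite fold_right_Cplus_init, IH by lia.
  destruct (p_real_nonneg m x ltac:(lia) Hx) as [Him _].
  unfold comb, P, reP. apply C_eq; simpl; rewrite Him; ring.
Qed.

Section Nodes.

Variables (c d : nat -> R).
Hypothesis c_interp : interpolant exp_l0 c.
Hypothesis d_interp : interpolant xexp_l0 d.

Definition node k := d k / c k.

Definition node_comb k x := 1 * comb d (S k) x + (- node (S k)) * comb c (S k) x.
Definition node_rem k x := 1 * rem xexp_l0 d (S k) x + (- node (S k)) * rem exp_l0 c (S k) x.

Lemma Rsmooth_node_rem k : (k <= n)%nat -> Rsmooth (node_rem k).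
Proof.
  intros Hk. apply Rsmooth_lin; apply Rsmooth_rem; auto using Rsmooth_xexp_l0, Rsmooth_exp_l0; lia.
Qed.

(* The node [node (S k)] is chosen so that the leading terms at [a] cancel. *)
Lemma node_rem_zero k : (k < n)%nat -> Rzero_atleast (node_rem k) a (S (S k)).
Proof.
  intros Hk. pose proof (interpolant_exp_l0_coef_pos c c_interp (S k) Hk).
  assert (SX : Rsmooth (rem xexp_l0 d (S k))) by (apply Rsmooth_rem; [apply Rsmooth_xexp_l0|lia]).
  assert (SU : Rsmooth (rem exp_l0 c (S k))) by (apply Rsmooth_rem; [apply Rsmooth_exp_l0|lia]).
  apply Rzero_atleast_S.
  - apply Rzero_atleast_lin; auto; apply interpolant_rem_zero;
      auto using Rsmooth_xexp_l0, Rsmooth_exp_l0; lia.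
  - unfold node_rem.
    rewrite Derive_n_lin, !interpolant_rem_lead by auto using Rsmooth_xexp_l0, Rsmooth_exp_l0.
    unfold node. field. lra.
Qed.

Lemma damp_node_comb k x : damp (node_comb k) x = (x - node (S k)) - damp (node_rem k) x.
Proof.
  transitivity (damp xexp_l0 x - node (S k) * damp exp_l0 x - damp (node_rem k) x).
  - unfold damp, node_comb, node_rem, rem. ring.
  - rewrite damp_xexp_l0, damp_exp_l0. ring.
Qed.

Lemma realE_node_comb k : (k < n)%nat -> realE (node_comb k).
Proof. intros Hk. apply realE_lin; apply realE_comb; lia. Qed.

Lemma node_comb_zero_b k : (k < n)%nat -> Rzero_atleast (node_comb k) b (n - k).
Proof.
  intros Hk. replace (n - k)%nat with (S (n - S k)) by lia.
  apply Rzero_atleast_lin; try (apply Rsmooth_comb; lia); apply comb_zero_b; lia.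
Qed.

Lemma damp_node_comb_neg k : (k < n)%nat -> forall y, a <= y < b -> damp (node_comb k) y < 0.
Proof.
  intros Hk. set (h := damp (node_rem k)).
  assert (Sh : Rsmooth h) by (apply Rsmooth_damp, Rsmooth_node_rem; lia).
  destruct (damp_zero_atleast _ a _ (Rsmooth_node_rem k ltac:(lia)) (node_rem_zero k Hk)) as [Zh _].
  fold h in Zh.
  assert (Dnode : forall y, Derive (damp (node_comb k)) y = 1 - Derive h y).
  { intros y. rewrite (Derive_ext _ _ y (damp_node_comb k)). apply is_derive_unique.
    auto_derive; [exact (Rsmooth_ex_derive h y Sh)|].
    change (Derive (fun x => damp (node_rem k) x) y) with (Derive h y). ring. }
  destruct (damp_zero_atleast _ b _ (proj1 (realE_node_comb k Hk)) (node_comb_zero_b k Hk))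
    as [Zb _].
  apply (damp_neg_before_b _ k (realE_node_comb k Hk) Hk).
  - rewrite Dnode. change (Derive h a) with (Derive_n h 1 a). rewrite Zh by lia. lra.
  - intros i Hi. rewrite <- Derive_n_S_Derive, (Derive_n_ext _ _ _ _ Dnode).
    rewrite Derive_n_minus, Derive_n_const, Derive_n_S_Derive, <- !Derive_n_S_Derive, Zh
      by (lia || auto using Rsmooth_const, Rsmooth_Derive). ring.
  - replace (n - S k)%nat with (n - k - 1)%nat by lia. apply Rzero_atleast_Derive, Zb.
  - apply (Rzero_atleast_value _ b (n - k)); [lia|exact Zb].
Qed.

Lemma node_gt_a k : (k < n)%nat -> a < node (S k).
Proof.
  intros Hk. pose proof (damp_node_comb_neg k Hk a ltac:(lra)) as Ha.
  destruct (damp_zero_atleast _ a _ (Rsmooth_node_rem k ltac:(lia)) (node_rem_zero k Hk)) as [Zh _].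
  rewrite damp_node_comb, (Rzero_atleast_value (damp (node_rem k)) a (S (S k))) in Ha
    by (lia || exact Zh). lra.
Qed.

Lemma node_le_succ k : (k < n)%nat -> node k <= node (S k).
Proof.
  intros Hk. destruct (Rle_or_lt (node k) (node (S k))) as [|Hlt]; [assumption|exfalso].
  pose proof (interpolant_exp_l0_coef_pos c c_interp k ltac:(lia)) as Ck.
  assert (Hdk : 0 < d k - node (S k) * c k).
  { assert (d k = node k * c k) by (unfold node; field; lra). nra. }
  set (G := node_comb k).
  destruct (damp_zero_atleast G b _ (proj1 (realE_node_comb k Hk)) (node_comb_zero_b k Hk))
    as [Zb Lb].
  assert (Hlead : (-1) ^ (n - k) * Derive_n (damp G) (n - k) b =
    (d k - node (S k) * c k) * ((-1) ^ (n - k) * Derive_n (P k) (n - k) b) * exp (- l0 * b)).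
  { rewrite Lb. unfold G, node_comb.
    rewrite Derive_n_lin, !Derive_n_comb_b_lead by (lia || apply Rsmooth_comb; lia). ring. }
  assert (Hsign : 0 < (-1) ^ (n - k) * Derive_n (damp G) (n - k) b).
  { rewrite Hlead. pose proof (P_lead_b_pos k ltac:(lia)). pose proof (exp_pos (- l0 * b)).
    apply Rmult_lt_0_compat; [apply Rmult_lt_0_compat|]; assumption. }
  apply (Rlt_asym _ _ Hsign). apply (leading_Derive_neg_left (damp G) a b); auto.
  - apply Rsmooth_damp, realE_node_comb, Hk.
  - intros E. rewrite E, Rmult_0_r in Hsign. lra.
  - intros x Hx. apply Rlt_le, damp_node_comb_neg; [exact Hk|lra].
Qed.

Lemma node_0 : node 0 = a.
Proof.
  pose proof (interpolant_at_a exp_l0 c Rsmooth_exp_l0 c_interp) as Ec.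
  pose proof (interpolant_at_a xexp_l0 d Rsmooth_xexp_l0 d_interp) as Ed.
  pose proof (interpolant_exp_l0_coef_pos c c_interp 0 (Nat.le_0_l n)).
  pose proof (P_lead_a_pos 0 (Nat.le_0_l n)). simpl in *.
  unfold node, xexp_l0, exp_l0 in *. rewrite Ec in Ed.
  apply (Rmult_eq_reg_r (c 0%nat * P 0%nat a)); [|nra].
  field_simplify; [nra|lra].
Qed.

Lemma node_n : node n = b.
Proof.
  pose proof (interpolant_at_b exp_l0 c c_interp realE_exp_l0) as Ec.
  pose proof (interpolant_at_b xexp_l0 d d_interp realE_xexp_l0) as Ed.
  pose proof (interpolant_exp_l0_coef_pos c c_interp n (le_n n)).
  pose proof (exp_pos (l0 * b)). unfold node, xexp_l0, exp_l0 in *. rewrite Ec in Ed.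
  assert (P n b <> 0) by (intros E; rewrite E in Ec; nra).
  apply (Rmult_eq_reg_r (c n * P n b)); [|nra].
  field_simplify; [nra|lra].
Qed.

Lemma node_in_interval k : (k <= n)%nat -> a <= node k <= b.
Proof.
  intros Hk. split.
  - destruct k as [|k]; [rewrite node_0; lra|]. apply Rlt_le, node_gt_a. lia.
  - replace k with (n - (n - k))%nat by lia. induction (n - k)%nat as [|m IH].
    + rewrite Nat.sub_0_r, node_n. lra.
    + destruct (Nat.lt_ge_cases m n) as [Hm|Hm].
      * replace (n - m)%nat with (S (n - S m)) in IH by lia.
        pose proof (node_le_succ (n - S m) ltac:(lia)). lra.
      * replace (n - S m)%nat with (n - m)%nat by lia. exact IH.
Qed.

Definition weight k := c k * exp (- l0 * node k).

Lemma reproduces_nodes : reproduces n a b l0 p node weight.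
Proof.
  pose proof (interpolant_exp_l0_coef_pos c c_interp) as Cpos.
  split; [|split].
  - intros k Hk. split; [apply node_in_interval, Hk|].
    apply Rmult_lt_0_compat; [apply Cpos, Hk|apply exp_pos].
  - intros x Hx. rewrite Bop_comb by exact Hx. f_equal.
    change (exp (l0 * x)) with (exp_l0 x).
    rewrite (interpolant_eq exp_l0 c c_interp realE_exp_l0 x Hx).
    unfold comb. apply lincomb_ext_coef. intros j Hj. unfold weight.
    rewrite Rmult_comm, Rmult_assoc, (Rmult_comm (exp _)), exp_l0_cancel. ring.
  - intros x Hx. rewrite Bop_comb by exact Hx. f_equal.
    change (x * exp (l0 * x)) with (xexp_l0 x).
    rewrite (interpolant_eq xexp_l0 d d_interp realE_xexp_l0 x Hx).
    unfold comb. apply lincomb_ext_coef. intros j Hj. unfold weight, node.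
    pose proof (Cpos j ltac:(lia)).
    transitivity (d j / c j * c j * (exp (l0 * (d j / c j)) * exp (- l0 * (d j / c j)))); [ring|].
    rewrite exp_l0_cancel. field. lra.
Qed.

Lemma reproduces_unique t' alpha' : reproduces n a b l0 p t' alpha' ->
  forall k, (k <= n)%nat -> t' k = node k /\ alpha' k = weight k.
Proof.
  intros [Hbounds [HU HX]] k Hk.
  assert (Ec : exp (l0 * t' k) * alpha' k = c k).
  { apply (comb_inj (fun j => exp (l0 * t' j) * alpha' j) c); [|exact Hk].
    intros x Hx. rewrite <- (interpolant_eq exp_l0 c c_interp realE_exp_l0 x Hx).
    specialize (HU x Hx). rewrite Bop_comb in HU by exact Hx. injection HU. auto. }
  assert (Ed : t' k * exp (l0 * t' k) * alpha' k = d k).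
  { apply (comb_inj (fun j => t' j * exp (l0 * t' j) * alpha' j) d); [|exact Hk].
    intros x Hx. rewrite <- (interpolant_eq xexp_l0 d d_interp realE_xexp_l0 x Hx).
    specialize (HX x Hx). rewrite Bop_comb in HX by exact Hx. injection HX. auto. }
  destruct (Hbounds k Hk) as [_ Ha']. pose proof (exp_pos (l0 * t' k)).
  assert (Ht : t' k = node k) by (unfold node; rewrite <- Ec, <- Ed; field; lra).
  split; [exact Ht|]. unfold weight. rewrite <- Ht, <- Ec.
  rewrite Rmult_comm, <- Rmult_assoc, (Rmult_comm (exp (- l0 * _))), exp_l0_cancel. ring.
Qed.

End Nodes.

End Reproduction.

Theorem theorem10 (a b l0 : R) (n : nat) (lam : nat -> C) (p : nat -> R -> C) :
  a < b -> (2 <= n)%nat ->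
  ext_chebyshev (map lam (seq 2 (n - 1))) a b ->
  conj_closed (map lam (seq 2 (n - 1))) ->
  bernstein_basis (RtoC l0 :: RtoC l0 :: map lam (seq 2 (n - 1))) a b n p ->
  (forall k x, (k <= n)%nat -> a <= x <= b -> snd (p k x) = 0 /\ 0 <= fst (p k x)) ->
  exists t alpha : nat -> R,
    reproduces n a b l0 p t alpha /\
    (forall t' alpha' : nat -> R, reproduces n a b l0 p t' alpha' ->
       forall k, (k <= n)%nat -> t' k = t k /\ alpha' k = alpha k).
Proof.
  intros Hab Hn Hcheb Hconj Hbasis Hreal. set (F := map lam (seq 2 (n - 1))) in *.
  assert (Hdim : length F = (n - 1)%nat) by (unfold F; rewrite length_map, length_seq; reflexivity).
  destruct (interpolant_exists a b l0 n F p) with (T := exp_l0 l0) as [c Hc];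
    eauto using Rsmooth_exp_l0.
  destruct (interpolant_exists a b l0 n F p) with (T := xexp_l0 l0) as [d Hd];
    eauto using Rsmooth_xexp_l0.
  exists (node c d), (weight l0 c d). split.
  - eapply reproduces_nodes; eassumption.
  - intros t' alpha' Hrep. eapply reproduces_unique; eassumption.
Qed.
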